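(* Let $M$ be a commutative monoid. The map $X\mapsto\mathcal K(X)=\bigcap_{I\in X}I$ is a bijection from the set of irreducible components of the terminal space $\mathcal S(M)$ onto the set of minimal elements (with respect to inclusion) of $\mathcal S(M)$, with inverse $I\mapsto\mathcal H(I)=\{J\in\mathcal S(M)\mid J\supseteq I\}$.
   Context: A monoid is a commutative monoid $(M,\cdot,1)$. An ideal of $M$ is a subset $I\subseteq M$ such that $im\in I$ for all $i\in I$, $m\in M$; it is proper if $I\neq M$. A proper ideal $K$ of $M$ is strongly irreducible if for all ideals $I,J$ of $M$, $I\cap J\subseteq K$ implies $I\subseteq K$ or $J\subseteq K$. $\mathcal S(M)$ is the set of all strongly irreducible ideals of $M$. For $X\subseteq\mathcal S(M)$, $\mathcal K(X)=\bigcap_{I\in X}I$, and $\mathcal{HK}(X)=\{J\in\mathcal S(M)\mid J\supseteq\mathcal K(X)\}$ if $X\neq\emptyset$, $\mathcal{HK}(\emptyset)=\emptyset$. The terminal space of $M$ is the set $\mathcal S(M)$ with the topology whose closed sets are exactly the sets $\mathcal{HK}(X)$, $X\subseteq\mathcal S(M)$. A subset $Y$ of a topological space is irreducible if it is nonempty and whenever $Y\subseteq Y_1\cup Y_2$ with $Y_1,Y_2$ closed, then $Y\subseteq Y_1$ or $Y\subseteq Y_2$; an irreducible component is a maximal (under inclusion) irreducible subset. *)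

From mathcomp Require Import all_boot.
From mathcomp Require Import boolp classical_sets.
Set Implicit Arguments. Unset Strict Implicit. Unset Printing Implicit Defensive.
Local Open Scope classical_set_scope.

Section TerminalSpace.
Variables (T : Type) (mul : T -> T -> T).

Definition is_ideal (I : set T) : Prop := forall i m, I i -> I (mul i m).

Definition strongly_irreducible (K : set T) : Prop :=
  [/\ is_ideal K, K <> setT &
      forall I J : set T, is_ideal I -> is_ideal J ->
        I `&` J `<=` K -> I `<=` K \/ J `<=` K].

Definition SM : set (set T) := [set K | strongly_irreducible K].

Definition Kc (X : set (set T)) : set T := \bigcap_(I in X) I.

Definition HK (X : set (set T)) : set (set T) :=
  [set J | X !=set0 /\ SM J /\ Kc X `<=` J].

Definition Hc (I : set T) : set (set T) := [set J | SM J /\ I `<=` J].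

Definition ts_closed (C : set (set T)) : Prop :=
  exists X, X `<=` SM /\ C = HK X.

Definition ts_irreducible (Y : set (set T)) : Prop :=
  [/\ Y `<=` SM, Y !=set0 &
      forall Y1 Y2, ts_closed Y1 -> ts_closed Y2 ->
        Y `<=` Y1 `|` Y2 -> Y `<=` Y1 \/ Y `<=` Y2].

Definition ts_component (Y : set (set T)) : Prop :=
  ts_irreducible Y /\ forall Z, ts_irreducible Z -> Y `<=` Z -> Z = Y.

Definition SM_minimal (I : set T) : Prop :=
  SM I /\ forall J, SM J -> J `<=` I -> J = I.

End TerminalSpace.

(* The proof rests on a single characterisation: a nonempty family
   Y of strongly irreducible ideals is an irreducible subset of the terminal
   space exactly when its intersection K(Y) is again strongly irreducible
   ([irreducible_SM_Kc], [SM_Kc_irreducible]).  Closed sets HK(Z) are used in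
   one direction to split Y along the two ideals I, J of a test I /\ J <= K(Y);
   in the other, a cover of Y by HK(X1) u HK(X2) yields K(X1) /\ K(X2) <= K(Y).
   Consequently H(I) is irreducible for every I in S(M), and K(H(I)) = I.
   Since H(K(Y)) contains Y and H is antitone, maximality of a component Y
   forces Y = H(K(Y)) with K(Y) minimal; conversely, for a minimal I any
   irreducible Z containing H(I) has K(Z) <= I, hence K(Z) = I and Z <= H(I).
   None of the monoid axioms are needed: the statement holds for any binary
   operation, and the final theorem simply ignores them. *)
From mathcomp Require Import all_boot.
From mathcomp Require Import boolp classical_sets.
Set Implicit Arguments. Unset Strict Implicit. Unset Printing Implicit Defensive.
Local Open Scope classical_set_scope.

Section TerminalSpaceComponents.
Variables (T : Type) (mul : T -> T -> T).

Lemma Kc_lb (X : set (set T)) (P : set T) : X P -> Kc X `<=` P.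
Proof. exact: bigcap_inf. Qed.

Lemma Kc_glb (X : set (set T)) (I : set T) :
  (forall P, X P -> I `<=` P) -> I `<=` Kc X.
Proof. exact: sub_bigcap. Qed.

Lemma ideal_Kc (X : set (set T)) :
  (forall P, X P -> is_ideal mul P) -> is_ideal mul (Kc X).
Proof. by move=> idX i m Ki P XP; apply: idX (Ki P XP). Qed.

Lemma ideal_Kc_SM (X : set (set T)) : X `<=` SM mul -> is_ideal mul (Kc X).
Proof. by move=> XS; apply: ideal_Kc => P /XS []. Qed.

Lemma Kc_neq_setT (X : set (set T)) (P : set T) :
  X P -> P <> setT -> Kc X <> setT.
Proof.
move=> XP PnT KT; apply: PnT; apply/seteqP; split=> // x _.
by apply: (Kc_lb XP); rewrite KT.
Qed.

Lemma Kc_set0 : Kc (set0 : set (set T)) = setT.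
Proof. by apply/seteqP; split=> // x _ P []. Qed.

Lemma Kc_Hc (I : set T) : SM mul I -> Kc (Hc mul I) = I.
Proof.
move=> SI; apply/seteqP; split; first by apply: Kc_lb; split.
by apply: Kc_glb => P [].
Qed.

Lemma sub_Hc_Kc (Y : set (set T)) : Y `<=` SM mul -> Y `<=` Hc mul (Kc Y).
Proof. by move=> YS P YP; split; [exact: YS | exact: Kc_lb]. Qed.

Lemma Hc_le (I J : set T) : J `<=` I -> Hc mul I `<=` Hc mul J.
Proof. by move=> JI P [SP IP]; split=> //; apply: subset_trans IP. Qed.

Lemma closed_HK (Z : set (set T)) : Z `<=` SM mul -> ts_closed mul (HK mul Z).
Proof. by move=> ZS; exists Z. Qed.

Lemma sub_HK (Z : set (set T)) : Z `<=` SM mul -> Z `<=` HK mul Z.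
Proof. by move=> ZS P ZP; split; [exists P | split; [exact: ZS | exact: Kc_lb]]. Qed.

Lemma HK_cover_Kc (Y : set (set T)) (I : set T) :
  Y `<=` HK mul (Y `&` Hc mul I) -> I `<=` Kc Y.
Proof.
move=> cover; apply: Kc_glb => P /cover [_ [_ KP]].
by apply: subset_trans KP; apply: Kc_glb => Q [_ []].
Qed.

Lemma irreducible_SM_Kc (Y : set (set T)) :
  ts_irreducible mul Y -> SM mul (Kc Y).
Proof.
move=> [YS [P0 YP0] irrY]; split.
- exact: ideal_Kc_SM.
- by apply: (Kc_neq_setT YP0); case: (YS P0 YP0).
move=> I J idI idJ IJK.
have YIS : Y `&` Hc mul I `<=` SM mul by move=> P [/YS].
have YJS : Y `&` Hc mul J `<=` SM mul by move=> P [/YS].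
have cover : Y `<=` HK mul (Y `&` Hc mul I) `|` HK mul (Y `&` Hc mul J).
  move=> P YP; have [_ _ siP] := YS P YP.
  have IJP : I `&` J `<=` P by apply: subset_trans IJK (Kc_lb YP).
  case: (siP I J idI idJ IJP) => [IP | JP].
  + by left; apply: sub_HK => //; split=> //; split=> //; exact: YS.
  + by right; apply: sub_HK => //; split=> //; split=> //; exact: YS.
case: (irrY _ _ (closed_HK YIS) (closed_HK YJS) cover) => coverI.
- by left; apply: HK_cover_Kc.
- by right; apply: HK_cover_Kc.
Qed.

Lemma SM_Kc_irreducible (Y : set (set T)) :
  Y `<=` SM mul -> Y !=set0 -> SM mul (Kc Y) -> ts_irreducible mul Y.
Proof.
move=> YS Y0 [_ KnT siK]; split=> // _ _ [X1 [X1S ->]] [X2 [X2S ->]] cover.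
have X12K : Kc X1 `&` Kc X2 `<=` Kc Y.
  apply: Kc_glb => P /cover [[_ [_ K1P]] | [_ [_ K2P]]] x [K1x K2x].
  - exact: K1P.
  - exact: K2P.
have nonempty X : Kc X `<=` Kc Y -> X !=set0.
  move=> XK; apply/set0P/negP => /eqP X0; apply: KnT.
  by apply/seteqP; split=> //; rewrite -Kc_set0 -X0.
have side X : Kc X `<=` Kc Y -> Y `<=` HK mul X.
  move=> XK P YP; split; first exact: nonempty.
  by split; [exact: YS | apply: subset_trans XK (Kc_lb YP)].
case: (siK _ _ (ideal_Kc_SM X1S) (ideal_Kc_SM X2S) X12K) => XK.
- by left; apply: side.
- by right; apply: side.
Qed.

Lemma irreducible_Hc (I : set T) : SM mul I -> ts_irreducible mul (Hc mul I).
Proof.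
move=> SI; apply: SM_Kc_irreducible; first by move=> P [].
- by exists I; split.
- by rewrite Kc_Hc.
Qed.

Lemma component_Hc_Kc (Y : set (set T)) :
  ts_component mul Y -> Hc mul (Kc Y) = Y.
Proof.
move=> [irrY maxY]; have [YS _ _] := irrY.
exact: maxY (irreducible_Hc (irreducible_SM_Kc irrY)) (sub_Hc_Kc YS).
Qed.

Lemma component_minimal (Y : set (set T)) :
  ts_component mul Y -> SM_minimal mul (Kc Y).
Proof.
move=> compY; have [irrY maxY] := compY.
split=> [|J SJ JK]; first exact: irreducible_SM_Kc.
have YHJ : Y `<=` Hc mul J by rewrite -(component_Hc_Kc compY); exact: Hc_le.
by rewrite -(maxY _ (irreducible_Hc SJ) YHJ) Kc_Hc.
Qed.

Lemma minimal_component (I : set T) :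
  SM_minimal mul I -> ts_component mul (Hc mul I).
Proof.
move=> [SI minI]; split=> [|Z irrZ HZ]; first exact: irreducible_Hc.
have [ZS _ _] := irrZ.
have KZI : Kc Z `<=` I by apply: Kc_lb; apply: HZ; split.
have KZ : Kc Z = I := minI _ (irreducible_SM_Kc irrZ) KZI.
by apply/seteqP; split=> //; rewrite -KZ; exact: sub_Hc_Kc.
Qed.

End TerminalSpaceComponents.

Theorem theorem2p8 (T : Type) (mul : T -> T -> T) (one : T)
    (mulA : forall x y z, mul x (mul y z) = mul (mul x y) z)
    (mulC : forall x y, mul x y = mul y x)
    (mul1 : forall x, mul one x = x) :
  (forall X : set (set T), ts_component mul X ->
      SM_minimal mul (Kc X) /\ Hc mul (Kc X) = X) /\
  (forall I : set T, SM_minimal mul I ->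
      ts_component mul (Hc mul I) /\ Kc (Hc mul I) = I).
Proof.
split=> [X compX | I minI].
- by split; [exact: component_minimal | exact: component_Hc_Kc].
- by split; [exact: minimal_component | case: minI => SI _; exact: Kc_Hc].
Qed.
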